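(* Assume $\mathbf A$ has full column rank, $\mathrm{var}(\tilde{\mathbf x})>0$, $\mathrm{var}(\tilde{\mathbf y})>0$, and $\boldsymbol\Pi_{\mathbf A}^\perp\dot{\mathbf a}_{\mathrm u}(\tilde{\mathbf q},\mathbf r_k)\neq\mathbf 0$, $\boldsymbol\Pi_{\mathbf A}^\perp\dot{\mathbf a}_{\mathrm v}(\tilde{\mathbf q},\mathbf r_k)\neq\mathbf 0$. Then for each $k$, $$\omega_{\mathrm u,k}\le\frac{4\pi^2N}{\lambda^2}\Big(\mathrm{var}(\tilde{\mathbf x})-\frac{\mathrm{cov}(\tilde{\mathbf x},\tilde{\mathbf y})^2}{\mathrm{var}(\tilde{\mathbf y})}\Big),\qquad \omega_{\mathrm v,k}\le\frac{4\pi^2N}{\lambda^2}\Big(\mathrm{var}(\tilde{\mathbf y})-\frac{\mathrm{cov}(\tilde{\mathbf x},\tilde{\mathbf y})^2}{\mathrm{var}(\tilde{\mathbf x})}\Big),$$ with equality in the first inequality if and only if $\mathbf A^{\mathsf H}\boldsymbol\Pi_k^\perp\big(\dot{\mathbf a}_{\mathrm u}(\tilde{\mathbf q},\mathbf r_k)-\zeta^*_{\mathrm u,k}\dot{\mathbf a}_{\mathrm v}(\tilde{\mathbf q},\mathbf r_k)\big)=\mathbf 0_{K\times1}$, and equality in the second if and only if $\mathbf A^{\mathsf H}\boldsymbol\Pi_k^\perp\big(\dot{\mathbf a}_{\mathrm v}(\tilde{\mathbf q},\mathbf r_k)-\zeta^*_{\mathrm v,k}\dot{\mathbf a}_{\mathrm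 u}(\tilde{\mathbf q},\mathbf r_k)\big)=\mathbf 0_{K\times1}$.
   Context: Fix $N>K\ge1$, $\lambda>0$. Antenna positions $\mathbf q_n=[x_n,y_n]^{\mathsf T}\in\mathbb R^2$ ($n=1,\dots,N$), $\tilde{\mathbf x}=[x_1,\dots,x_N]^{\mathsf T}$, $\tilde{\mathbf y}=[y_1,\dots,y_N]^{\mathsf T}$; target coordinates $\mathbf r_k=[u_k,v_k]^{\mathsf T}\in\mathbb R^2$, $k=1,\dots,K$. Steering vector $\mathbf a(\tilde{\mathbf q},\mathbf r)\in\mathbb C^N$ with $n$-th entry $e^{\mathrm j\frac{2\pi}{\lambda}\mathbf q_n^{\mathsf T}\mathbf r}$; $\mathbf A=[\mathbf a(\tilde{\mathbf q},\mathbf r_1),\dots,\mathbf a(\tilde{\mathbf q},\mathbf r_K)]$. $\dot{\mathbf a}_{\mathrm u}(\tilde{\mathbf q},\mathbf r_k)$ has $n$-th entry $\mathrm j\frac{2\pi}{\lambda}x_ne^{\mathrm j\frac{2\pi}{\lambda}\mathbf q_n^{\mathsf T}\mathbf r_k}$ and $\dot{\mathbf a}_{\mathrm v}(\tilde{\mathbf q},\mathbf r_k)$ has $n$-th entry $\mathrm j\frac{2\pi}{\lambda}y_ne^{\mathrm j\frac{2\pi}{\lambda}\mathbf q_n^{\mathsf T}\mathbf r_k}$. $\boldsymbol\Pi_{\mathbf A}^\perp=\mathbf I_N-\mathbf A(\mathbf A^{\mathsf H}\mathbf A)^{-1}\mathbf A^{\mathsf H}$ and $\boldsymbol\Pi_k^\perp=\mathbf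 I_N-\mathbf a(\tilde{\mathbf q},\mathbf r_k)\mathbf a(\tilde{\mathbf q},\mathbf r_k)^{\mathsf H}/\|\mathbf a(\tilde{\mathbf q},\mathbf r_k)\|_2^2$. Effective sensitivity powers: $\omega_{\mathrm u,k}=\min_{\zeta\in\mathbb R}\|\boldsymbol\Pi_{\mathbf A}^\perp(\dot{\mathbf a}_{\mathrm u}(\tilde{\mathbf q},\mathbf r_k)-\zeta\dot{\mathbf a}_{\mathrm v}(\tilde{\mathbf q},\mathbf r_k))\|_2^2=\|\boldsymbol\Pi_{\mathbf A}^\perp\dot{\mathbf a}_{\mathrm u}\|_2^2-\frac{\Re\{\dot{\mathbf a}_{\mathrm u}^{\mathsf H}\boldsymbol\Pi_{\mathbf A}^\perp\dot{\mathbf a}_{\mathrm v}\}^2}{\|\boldsymbol\Pi_{\mathbf A}^\perp\dot{\mathbf a}_{\mathrm v}\|_2^2}$ and $\omega_{\mathrm v,k}=\min_{\zeta\in\mathbb R}\|\boldsymbol\Pi_{\mathbf A}^\perp(\dot{\mathbf a}_{\mathrm v}-\zeta\dot{\mathbf a}_{\mathrm u})\|_2^2=\|\boldsymbol\Pi_{\mathbf A}^\perp\dot{\mathbf a}_{\mathrm v}\|_2^2-\frac{\Re\{\dot{\mathbf a}_{\mathrm u}^{\mathsf H}\boldsymbol\Pi_{\mathbf A}^\perp\dot{\mathbf a}_{\mathrm v}\}^2}{\|\boldsymbol\Pi_{\mathbf A}^\perp\dot{\mathbf a}_{\mathrm u}\|_2^2}$ (all vectors evaluated at $(\tilde{\mathbf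 q},\mathbf r_k)$). Further $\zeta^*_{\mathrm u,k}=\frac{\Re\{\dot{\mathbf a}_{\mathrm u}^{\mathsf H}\boldsymbol\Pi_k^\perp\dot{\mathbf a}_{\mathrm v}\}}{\|\boldsymbol\Pi_k^\perp\dot{\mathbf a}_{\mathrm v}\|_2^2}$ and $\zeta^*_{\mathrm v,k}=\frac{\Re\{\dot{\mathbf a}_{\mathrm u}^{\mathsf H}\boldsymbol\Pi_k^\perp\dot{\mathbf a}_{\mathrm v}\}}{\|\boldsymbol\Pi_k^\perp\dot{\mathbf a}_{\mathrm u}\|_2^2}$. $\mu(\tilde{\mathbf x})=\frac1N\sum_nx_n$, $\mathrm{var}(\tilde{\mathbf x})=\frac1N\sum_n(x_n-\mu(\tilde{\mathbf x}))^2$ (same for $\tilde{\mathbf y}$), $\mathrm{cov}(\tilde{\mathbf x},\tilde{\mathbf y})=\frac1N\sum_n(x_n-\mu(\tilde{\mathbf x}))(y_n-\mu(\tilde{\mathbf y}))$. *)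

From HB Require Import structures.
From mathcomp Require Import all_boot all_order all_algebra.
From mathcomp Require Import all_classical all_reals.
From mathcomp Require Import trigo.
From mathcomp Require Import complex.
Set Implicit Arguments. Unset Strict Implicit. Unset Printing Implicit Defensive.
Import Order.TTheory GRing.Theory Num.Theory.
Local Open Scope ring_scope.

Section Defs.
Variable R : realType.
Local Notation C := R[i].

Definition expj (t : R) : C := Complex (cos t) (sin t).
Definition jC : C := Complex 0 1.
Definition cR (x : R) : C := Complex x 0.

Definition hermT m n (M : 'M[C]_(m, n)) : 'M[C]_(n, m) :=
  \matrix_(i, j) conjc (M j i).

Definition norm2 n (v : 'cV[C]_n) : R := \sum_i (complex.Re (v i 0) ^+ 2 + complex.Im (v i 0) ^+ 2).

Definition reip n (v w : 'cV[C]_n) : R := complex.Re ((hermT v *m w) 0 0).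

Variables (N K : nat) (lambda : R).
Variables (x y : 'I_N -> R).   (* antenna coordinates x_n, y_n *)

(* steering vector a(q, r), r = [u; v] *)
Definition steer (u v : R) : 'cV[C]_N :=
  \col_n expj (2 * pi / lambda * (x n * u + y n * v)).
Definition steer_du (u v : R) : 'cV[C]_N :=
  \col_n (jC * cR (2 * pi / lambda * x n) * expj (2 * pi / lambda * (x n * u + y n * v))).
Definition steer_dv (u v : R) : 'cV[C]_N :=
  \col_n (jC * cR (2 * pi / lambda * y n) * expj (2 * pi / lambda * (x n * u + y n * v))).

Variables (tu tv : 'I_K -> R).  (* target coordinates u_k, v_k *)

Definition steerA : 'M[C]_(N, K) := \matrix_(n, k) steer (tu k) (tv k) n 0.

Definition PiAperp : 'M[C]_N :=
  1%:M - steerA *m invmx (hermT steerA *m steerA) *m hermT steerA.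

Definition Pikperp (k : 'I_K) : 'M[C]_N :=
  let a := steer (tu k) (tv k) in
  1%:M - (cR (norm2 a))^-1 *: (a *m hermT a).

Definition au (k : 'I_K) := steer_du (tu k) (tv k).
Definition av (k : 'I_K) := steer_dv (tu k) (tv k).

Definition omega_u (k : 'I_K) : R :=
  norm2 (PiAperp *m au k)
  - (reip (au k) (PiAperp *m av k)) ^+ 2 / norm2 (PiAperp *m av k).
Definition omega_v (k : 'I_K) : R :=
  norm2 (PiAperp *m av k)
  - (reip (au k) (PiAperp *m av k)) ^+ 2 / norm2 (PiAperp *m au k).

Definition zeta_u (k : 'I_K) : R :=
  reip (au k) (Pikperp k *m av k) / norm2 (Pikperp k *m av k).
Definition zeta_v (k : 'I_K) : R :=
  reip (au k) (Pikperp k *m av k) / norm2 (Pikperp k *m au k).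

End Defs.

Definition mean (R : realType) N (x : 'I_N -> R) : R := (\sum_n x n) / N%:R.
Definition cov (R : realType) N (x y : 'I_N -> R) : R :=
  (\sum_n (x n - mean x) * (y n - mean y)) / N%:R.
Definition var (R : realType) N (x : 'I_N -> R) : R := cov x x.

From HB Require Import structures.
From mathcomp Require Import all_boot all_order all_algebra.
From mathcomp Require Import all_classical all_reals.
From mathcomp Require Import trigo.
From mathcomp Require Import complex.
From mathcomp Require Import ring lra.
Set Implicit Arguments. Unset Strict Implicit. Unset Printing Implicit Defensive.
Import Order.TTheory GRing.Theory Num.Theory.
Local Open Scope ring_scope.

(** Let [q := Pi_k^perp (a_u - zeta a_v)] with [zeta := cov(x,y) / var(y)], the
    least-squares coefficient.  Since [Pi_k^perp] removes the mean of the
    antenna coordinates, [q] is the steering derivative along the centred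
    regression residual of [x] on [y]: hence [||q||^2] is exactly the claimed
    bound and [q] is orthogonal to [a_v].  As [Pi_A^perp Pi_k^perp = Pi_A^perp],
    [omega_u = min_zeta ||Pi_A^perp (a_u - zeta a_v)||^2 <= ||Pi_A^perp q||^2
    <= ||q||^2], and both steps are equalities iff [Pi_A^perp q = q], i.e.
    [A^H q = 0]: then the orthogonality of [q] and [a_v] makes [zeta] the
    minimiser for [Pi_A^perp] as well. *)

Section ComplexInnerProduct.
Variable R : realType.
Local Notation C := R[i].

Lemma cR_real_complex (t : R) : cR t = real_complex R t.
Proof. by []. Qed.

Lemma Re_cR_mul (t : R) (z : C) : complex.Re (cR t * z) = t * complex.Re z.
Proof. by case: z => a b /=; ring. Qed.

Lemma hermT_mul m n p (A : 'M[C]_(m, n)) (B : 'M[C]_(n, p)) :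
  hermT (A *m B) = hermT B *m hermT A.
Proof.
apply/matrixP => i j; rewrite !mxE rmorph_sum; apply: eq_bigr => l _.
by rewrite !mxE rmorphM mulrC.
Qed.

Lemma hermTK m n (A : 'M[C]_(m, n)) : hermT (hermT A) = A.
Proof. by apply/matrixP => i j; rewrite !mxE conjcK. Qed.

Lemma hermTB m n (A B : 'M[C]_(m, n)) : hermT (A - B) = hermT A - hermT B.
Proof. by apply/matrixP => i j; rewrite !mxE rmorphB. Qed.

Lemma hermT1 n : hermT (1%:M : 'M[C]_n) = 1%:M.
Proof. by apply/matrixP => i j; rewrite !mxE conjc_nat eq_sym. Qed.

Lemma hermT0 m n : hermT (0 : 'M[C]_(m, n)) = 0.
Proof. by apply/matrixP => i j; rewrite !mxE conjc0. Qed.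

Lemma reip_sum n (v w : 'cV[C]_n) :
  reip v w = \sum_i complex.Re (conjc (v i 0) * w i 0).
Proof. by rewrite /reip mxE raddf_sum; apply: eq_bigr => i _; rewrite mxE. Qed.

Lemma reipC n (v w : 'cV[C]_n) : reip v w = reip w v.
Proof.
rewrite !reip_sum; apply: eq_bigr => i _.
by case: (v i 0) => a b; case: (w i 0) => c d /=; ring.
Qed.

Lemma reipDr n (u v w : 'cV[C]_n) : reip u (v + w) = reip u v + reip u w.
Proof. by rewrite /reip mulmxDr mxE raddfD. Qed.

Lemma reipNr n (u v : 'cV[C]_n) : reip u (- v) = - reip u v.
Proof. by rewrite /reip mulmxN mxE raddfN. Qed.

Lemma reipBr n (u v w : 'cV[C]_n) : reip u (v - w) = reip u v - reip u w.
Proof. by rewrite reipDr reipNr. Qed.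

Lemma reipZr n (t : R) (u v : 'cV[C]_n) : reip u (cR t *: v) = t * reip u v.
Proof. by rewrite /reip -scalemxAr mxE Re_cR_mul. Qed.

Lemma reipBl n (u v w : 'cV[C]_n) : reip (v - w) u = reip v u - reip w u.
Proof. by rewrite reipC reipBr !(reipC u). Qed.

Lemma reipZl n (t : R) (u v : 'cV[C]_n) : reip (cR t *: v) u = t * reip v u.
Proof. by rewrite reipC reipZr reipC. Qed.

Lemma reip_hermT n (M : 'M[C]_n) (v w : 'cV[C]_n) :
  reip v (M *m w) = reip (hermT M *m v) w.
Proof. by rewrite /reip hermT_mul hermTK mulmxA. Qed.

Lemma norm2E n (v : 'cV[C]_n) : norm2 v = reip v v.
Proof.
rewrite reip_sum; apply: eq_bigr => i _.
by case: (v i 0) => a b /=; ring.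
Qed.

Lemma norm2_ge0 n (v : 'cV[C]_n) : 0 <= norm2 v.
Proof. by apply: sumr_ge0 => i _; rewrite addr_ge0 ?sqr_ge0. Qed.

Lemma norm2_eq0 n (v : 'cV[C]_n) : (norm2 v == 0) = (v == 0).
Proof.
apply/eqP/eqP => [|->]; last by rewrite /norm2 big1 // => i _; rewrite mxE expr0n add0r.
move/eqP; rewrite psumr_eq0 => [/allP v0|i _]; last by rewrite addr_ge0 ?sqr_ge0.
apply/matrixP => i j; rewrite ord1 mxE.
move: (v0 i (mem_index_enum _)); rewrite implyTb paddr_eq0 ?sqr_ge0 // !sqrf_eq0.
by case: (v i 0) => a b /andP[/= /eqP-> /eqP->].
Qed.

Lemma norm2_gt0 n (v : 'cV[C]_n) : (0 < norm2 v) = (v != 0).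
Proof. by rewrite lt_def norm2_eq0 norm2_ge0 andbT. Qed.

Lemma norm2B n (v w : 'cV[C]_n) :
  norm2 (v - w) = norm2 v - 2 * reip v w + norm2 w.
Proof. by rewrite !norm2E reipBl !reipBr (reipC w v); ring. Qed.

Lemma norm2Z n (t : R) (v : 'cV[C]_n) : norm2 (cR t *: v) = t ^+ 2 * norm2 v.
Proof. by rewrite !norm2E reipZl reipZr; ring. Qed.

End ComplexInnerProduct.

(* The minimum over [z] of [||P (d1 - z d2)||^2], cf. [eff_sensitivity_residual];
   [omega_u k] is [eff_sensitivity PiAperp (au k) (av k)] by definition. *)
Definition eff_sensitivity (R : realType) n (P : 'M[R[i]]_n) (d1 d2 : 'cV[R[i]]_n) : R :=
  norm2 (P *m d1) - reip d1 (P *m d2) ^+ 2 / norm2 (P *m d2).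

Section OrthogonalProjector.
Variables (R : realType) (n : nat) (P : 'M[R[i]]_n).
Hypotheses (P_herm : hermT P = P) (P_idem : P *m P = P).

Lemma reip_proj (v w : 'cV[R[i]]_n) : reip v (P *m w) = reip (P *m v) w.
Proof. by rewrite reip_hermT P_herm. Qed.

Lemma reip_proj_proj (v w : 'cV[R[i]]_n) : reip (P *m v) (P *m w) = reip v (P *m w).
Proof. by rewrite -reip_proj mulmxA P_idem. Qed.

Lemma norm2_pythagoras (q : 'cV[R[i]]_n) :
  norm2 q = norm2 (P *m q) + norm2 (q - P *m q).
Proof. by rewrite norm2B -reip_proj_proj -norm2E; ring. Qed.

Lemma eff_sensitivity_residual (d1 d2 : 'cV[R[i]]_n) (z : R) : P *m d2 != 0 ->
  norm2 (P *m (d1 - cR z *: d2)) = eff_sensitivity P d1 d2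
    + reip (d1 - cR z *: d2) (P *m d2) ^+ 2 / norm2 (P *m d2).
Proof.
rewrite -norm2_gt0 => /lt0r_neq0 d2_neq0.
rewrite /eff_sensitivity mulmxBr -scalemxAr norm2B norm2Z reipZr reipBl reipZl.
rewrite reip_proj_proj -[reip d2 _]reip_proj_proj -norm2E.
by field.
Qed.

Lemma eff_sensitivity_le (d1 d2 q : 'cV[R[i]]_n) (z : R) :
  P *m q = P *m (d1 - cR z *: d2) -> P *m d2 != 0 -> reip q d2 = 0 ->
  eff_sensitivity P d1 d2 <= norm2 q /\
  (eff_sensitivity P d1 d2 = norm2 q <-> P *m q = q).
Proof.
move=> Pq Pd2 q_orth.
have res := eff_sensitivity_residual d1 z Pd2.
rewrite -Pq reip_proj -Pq in res.
have pyth := norm2_pythagoras q.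
have perp_ge0 := norm2_ge0 (q - P *m q).
have coef_ge0 : 0 <= reip (P *m q) d2 ^+ 2 / norm2 (P *m d2).
  by rewrite divr_ge0 ?sqr_ge0 ?norm2_ge0.
split; first lra.
split=> [eq_q | Pq_q].
- have /eqP : norm2 (q - P *m q) = 0 by lra.
  by rewrite norm2_eq0 subr_eq0 => /eqP <-.
- by move: res; rewrite Pq_q q_orth expr0n mul0r addr0.
Qed.

End OrthogonalProjector.

Definition perp_proj (R : realType) n m (A : 'M[R[i]]_(n, m)) : 'M[R[i]]_n :=
  1%:M - A *m invmx (hermT A *m A) *m hermT A.

Section PerpProjector.
Variables (R : realType) (n m : nat) (A : 'M[R[i]]_(n, m)).
Hypothesis A_full : \rank A = m.
Local Notation G := (hermT A *m A).
Local Notation P := (perp_proj A).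

(* [u G = 0] forces [A u^H = 0], whose squared norm is [u G u^H]. *)
Lemma gram_unit : G \in unitmx.
Proof.
rewrite -row_free_unit; apply: inj_row_free => u uG0.
have Au0 : A *m hermT u = 0.
  apply/eqP; rewrite -norm2_eq0 norm2E /reip hermT_mul hermTK mulmxA.
  by rewrite -[u *m _ *m A]mulmxA uG0 !mul0mx mxE.
have /row_free_inj : row_free A^T by rewrite /row_free mxrank_tr A_full.
move=> /(_ _ (hermT u)^T 0); rewrite -trmx_mul Au0 trmx0 mul0mx.
move=> /(_ erefl)/(congr1 trmx); rewrite trmxK trmx0 => uH0.
by rewrite -[u]hermTK uH0 hermT0.
Qed.

Lemma hermT_invmx_gram : hermT (invmx G) = invmx G.
Proof.
have GH : hermT G = G by rewrite hermT_mul hermTK.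
have : hermT (invmx G) *m G = 1%:M.
  by rewrite -{2}GH -hermT_mul mulmxV ?gram_unit ?hermT1.
by move/(canRL (mulmxK gram_unit)); rewrite mul1mx.
Qed.

Lemma perp_proj_herm : hermT P = P.
Proof. by rewrite /perp_proj hermTB hermT1 !hermT_mul hermTK hermT_invmx_gram mulmxA. Qed.

Lemma perp_proj_mulA : P *m A = 0.
Proof.
by rewrite /perp_proj mulmxBl mul1mx -!mulmxA mulVmx ?gram_unit // mulmx1 subrr.
Qed.

Lemma adj_perp_proj : hermT A *m P = 0.
Proof. by rewrite -perp_proj_herm -hermT_mul perp_proj_mulA hermT0. Qed.

Lemma perp_proj_idem : P *m P = P.
Proof. by rewrite {1}/perp_proj mulmxBl mul1mx -!mulmxA adj_perp_proj !mulmx0 subr0. Qed.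

Lemma perp_proj_fixE (q : 'cV[R[i]]_n) : P *m q = q <-> hermT A *m q = 0.
Proof.
split=> [<- | Aq0]; first by rewrite mulmxA adj_perp_proj mul0mx.
by rewrite /perp_proj mulmxBl mul1mx -!mulmxA Aq0 !mulmx0 subr0.
Qed.

End PerpProjector.

Section SampleStatistics.
Variables (R : realType) (N : nat).
Hypothesis N_gt0 : (0 < N)%N.
Implicit Types f g h : 'I_N -> R.

Definition centered f n := f n - mean f.

Lemma covE f g : cov f g = (\sum_n centered f n * centered g n) / N%:R.
Proof. by []. Qed.

Lemma N_neq0 : N%:R != 0 :> R.
Proof. by rewrite pnatr_eq0 -lt0n. Qed.

Lemma sum_centered f : \sum_n centered f n = 0.
Proof. by rewrite sumrB sumr_const card_ord -mulr_natr /mean divfK ?subrr ?N_neq0. Qed.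

Lemma sum_mul_centered f g : \sum_n f n * centered g n = N%:R * cov f g.
Proof.
have -> : \sum_n f n * centered g n =
    \sum_n centered f n * centered g n + mean f * \sum_n centered g n.
  by rewrite mulr_sumr -big_split; apply: eq_bigr => n _ /=; rewrite /centered; ring.
by rewrite sum_centered mulr0 addr0 covE mulrC divfK ?N_neq0.
Qed.

Lemma sum_centered_sqr f : \sum_n centered f n ^+ 2 = N%:R * var f.
Proof.
by rewrite /var covE mulrC divfK ?N_neq0 //; apply: eq_bigr => n _; rewrite expr2.
Qed.

Lemma centeredB f g (s : R) n :
  centered (fun n => f n - s * g n) n = centered f n - s * centered g n.
Proof.
rewrite /centered /mean sumrB -mulr_sumr.
by move: N_neq0 => N0; field.
Qed.

Lemma covC f g : cov f g = cov g f.
Proof. by rewrite !covE; congr (_ / _); apply: eq_bigr => n _; rewrite mulrC. Qed.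

Lemma covBl f g h (s : R) :
  cov (fun n => f n - s * g n) h = cov f h - s * cov g h.
Proof.
rewrite !covE mulrA -mulrBl; congr (_ / _).
by rewrite mulr_sumr -sumrB; apply: eq_bigr => n _; rewrite centeredB; ring.
Qed.

Lemma var_regression_residual f g : var g != 0 ->
  var (fun n => f n - cov f g / var g * g n) = var f - cov f g ^+ 2 / var g.
Proof.
rewrite /var => vg; set z := cov f g / cov g g.
by rewrite covBl (covC f) (covC g) !covBl (covC g f) /z; field.
Qed.

Lemma cov_regression_residual f g : var g != 0 ->
  cov (fun n => f n - cov f g / var g * g n) g = 0.
Proof. by move=> vg; rewrite covBl -/(var g) divfK ?subrr. Qed.

End SampleStatistics.

Section SteeringVectors.
Variables (R : realType) (N K : nat) (lambda : R) (x y : 'I_N -> R).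
Variables (tu tv : 'I_K -> R) (k : 'I_K).
Hypothesis N_gt0 : (0 < N)%N.
Local Notation C := R[i].
Local Notation j := (@jC R).
Local Notation c := (2 * pi / lambda).
Local Notation a := (steer lambda x y (tu k) (tv k)).
Local Notation Pik := (Pikperp lambda x y tu tv k).

(* [au k = steer_deriv x] and [av k = steer_deriv y] hold by conversion. *)
Definition steer_deriv (f : 'I_N -> R) : 'cV[C]_N :=
  \col_n (j * cR (c * f n) * expj (c * (x n * tu k + y n * tv k))).

Lemma conjc_expjM (t : R) : conjc (expj t) * expj t = 1.
Proof.
rewrite /expj; apply/eqP; rewrite eq_complex /=; apply/andP; split; apply/eqP.
- by rewrite -[RHS](cos2Dsin2 t); ring.
- by ring.
Qed.

Lemma reip_steer_deriv f g :
  reip (steer_deriv f) (steer_deriv g) = c ^+ 2 * \sum_n f n * g n.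
Proof.
rewrite reip_sum mulr_sumr; apply: eq_bigr => n _; rewrite !mxE /expj /jC /cR /=.
set t := c * (x n * tu k + y n * tv k).
transitivity (c ^+ 2 * (f n * g n) * (cos t ^+ 2 + sin t ^+ 2)); first by ring.
by rewrite cos2Dsin2 mulr1.
Qed.

Lemma norm2_steer_deriv f : norm2 (steer_deriv f) = c ^+ 2 * \sum_n f n ^+ 2.
Proof. by rewrite norm2E reip_steer_deriv; under eq_bigr do rewrite -expr2. Qed.

Lemma steer_derivB f g (s : R) :
  steer_deriv f - cR s *: steer_deriv g = steer_deriv (fun n => f n - s * g n).
Proof.
by apply/matrixP => i j; rewrite !mxE !cR_real_complex !(rmorphM, rmorphB) /=; ring.
Qed.

Lemma norm2_steer : norm2 a = N%:R.
Proof.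
rewrite /norm2 (eq_bigr (fun _ => 1)) ?sumr_const ?card_ord // => n _.
by rewrite mxE /= cos2Dsin2.
Qed.

Lemma steer_adj_deriv f :
  (hermT a *m steer_deriv f) 0 0 = j * cR (c * \sum_n f n).
Proof.
rewrite mxE mulr_sumr cR_real_complex rmorph_sum mulr_sumr; apply: eq_bigr => n _.
by rewrite !mxE mulrCA conjc_expjM mulr1.
Qed.

Lemma Pik_steer_deriv f : Pik *m steer_deriv f = steer_deriv (centered f).
Proof.
rewrite /Pikperp /= norm2_steer mulmxBl mul1mx -scalemxAl -mulmxA.
apply/matrixP => i j; rewrite ord1 !mxE big_ord1 steer_adj_deriv !mxE.
rewrite /centered /mean !cR_real_complex !(rmorphM, rmorphB, fmorphV) /=.
by ring.
Qed.

Lemma reip_Pik_steer_deriv f g :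
  reip (steer_deriv f) (Pik *m steer_deriv g) = c ^+ 2 * (N%:R * cov f g).
Proof. by rewrite Pik_steer_deriv reip_steer_deriv sum_mul_centered. Qed.

Lemma reip_Pik_steer_derivC f g :
  reip (steer_deriv f) (Pik *m steer_deriv g)
  = reip (steer_deriv g) (Pik *m steer_deriv f).
Proof. by rewrite !reip_Pik_steer_deriv covC. Qed.

Lemma norm2_Pik_steer_deriv g :
  norm2 (Pik *m steer_deriv g) = c ^+ 2 * (N%:R * var g).
Proof. by rewrite Pik_steer_deriv norm2_steer_deriv sum_centered_sqr. Qed.

Lemma reip_Pik_ratio f g : 0 < lambda ->
  reip (steer_deriv f) (Pik *m steer_deriv g) / norm2 (Pik *m steer_deriv g)
  = cov f g / var g.
Proof.
move=> lambda_gt0; rewrite reip_Pik_steer_deriv norm2_Pik_steer_deriv.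
have c_neq0 : c ^+ 2 * N%:R != 0.
  by rewrite mulf_neq0 ?N_neq0 ?expf_neq0 ?mulf_neq0 ?invr_eq0 ?gt_eqF ?pi_gt0.
by move: (cov f g) (var g) => u v; rewrite !mulrA -mulf_div mulfV ?mul1r.
Qed.

End SteeringVectors.

Section SensitivityBound.
Variables (R : realType) (N K : nat) (lambda : R) (x y : 'I_N -> R).
Variables (tu tv : 'I_K -> R) (k : 'I_K).
Hypotheses (N_gt0 : (0 < N)%N) (lambda_gt0 : 0 < lambda).
Hypothesis A_full : \rank (steerA lambda x y tu tv) = K.
Local Notation A := (steerA lambda x y tu tv).
Local Notation PA := (PiAperp lambda x y tu tv).
Local Notation Pik := (Pikperp lambda x y tu tv k).
Local Notation d := (steer_deriv lambda x y tu tv k).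

Lemma PiAperpE : PA = perp_proj A.
Proof. by []. Qed.

Lemma steer_colE : steer lambda x y (tu k) (tv k) = A *m delta_mx k 0.
Proof. by rewrite -colE; apply/matrixP => i j; rewrite ord1 !mxE. Qed.

Lemma PiA_Pik (v : 'cV[R[i]]_N) : PA *m (Pik *m v) = PA *m v.
Proof.
rewrite mulmxA /Pikperp /= mulmxBr mulmx1 -scalemxAr mulmxA steer_colE mulmxA.
by rewrite PiAperpE perp_proj_mulA // !mul0mx scaler0 subr0.
Qed.

Lemma eff_sensitivity_steer_le f g : 0 < var g -> PA *m d g != 0 ->
  let z := cov f g / var g in
  let bound := 4 * pi ^+ 2 * N%:R / lambda ^+ 2 * (var f - cov f g ^+ 2 / var g) in
  eff_sensitivity PA (d f) (d g) <= bound /\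
  (eff_sensitivity PA (d f) (d g) = bound <->
     hermT A *m (Pik *m (d f - cR z *: d g)) = 0).
Proof.
move=> vg_gt0 PAg z bound; have vg_neq0 := lt0r_neq0 vg_gt0.
set q := Pik *m (d f - cR z *: d g).
have q_def : q = d (centered (fun n => f n - z * g n)).
  by rewrite /q steer_derivB Pik_steer_deriv.
have norm2_q : norm2 q = bound.
  rewrite q_def norm2_steer_deriv sum_centered_sqr // var_regression_residual //.
  rewrite /bound; move: (lt0r_neq0 lambda_gt0) (var f - _) => lambda_neq0 w.
  by field.
have q_orth : reip q (d g) = 0.
  rewrite reipC q_def reip_steer_deriv sum_mul_centered // covC.
  by rewrite cov_regression_residual // !mulr0.
have Pq : PA *m q = PA *m (d f - cR z *: d g) by apply: PiA_Pik.
rewrite -norm2_q -perp_proj_fixE //.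
exact: (eff_sensitivity_le (perp_proj_herm A_full) (perp_proj_idem A_full)
          Pq PAg q_orth).
Qed.

End SensitivityBound.

Theorem mainTheorem3 (R : realType) (N K : nat) (lambda : R)
  (x y : 'I_N -> R) (tu tv : 'I_K -> R) (k : 'I_K) :
  (K < N)%N -> (1 <= K)%N -> 0 < lambda ->
  \rank (steerA lambda x y tu tv) = K ->
  0 < var x -> 0 < var y ->
  PiAperp lambda x y tu tv *m au lambda x y tu tv k != 0 ->
  PiAperp lambda x y tu tv *m av lambda x y tu tv k != 0 ->
  let bu := 4 * pi ^+ 2 * N%:R / lambda ^+ 2 * (var x - cov x y ^+ 2 / var y) in
  let bv := 4 * pi ^+ 2 * N%:R / lambda ^+ 2 * (var y - cov x y ^+ 2 / var x) in
  [/\ omega_u lambda x y tu tv k <= bu,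
      omega_v lambda x y tu tv k <= bv,
      omega_u lambda x y tu tv k = bu <->
        hermT (steerA lambda x y tu tv) *m (Pikperp lambda x y tu tv k *m
          (au lambda x y tu tv k
           - cR (zeta_u lambda x y tu tv k) *: av lambda x y tu tv k)) = 0
    & omega_v lambda x y tu tv k = bv <->
        hermT (steerA lambda x y tu tv) *m (Pikperp lambda x y tu tv k *m
          (av lambda x y tu tv k
           - cR (zeta_v lambda x y tu tv k) *: au lambda x y tu tv k)) = 0].
Proof.
move=> KN _ lambda_gt0 A_full vx_gt0 vy_gt0 PAu PAv bu bv.
have N_gt0 : (0 < N)%N by apply: leq_ltn_trans KN.
have zeta_uE : zeta_u lambda x y tu tv k = cov x y / var y.
  exact: (reip_Pik_ratio x y tu tv k N_gt0 x y lambda_gt0).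
have zeta_vE : zeta_v lambda x y tu tv k = cov x y / var x.
  rewrite /zeta_v (reip_Pik_steer_derivC lambda x y tu tv k N_gt0 x y) covC.
  exact: (reip_Pik_ratio x y tu tv k N_gt0 y x lambda_gt0).
have omega_vE : omega_v lambda x y tu tv k = eff_sensitivity
    (PiAperp lambda x y tu tv) (av lambda x y tu tv k) (au lambda x y tu tv k).
  by rewrite /omega_v /eff_sensitivity reipC (reip_proj (perp_proj_herm A_full)).
have [u_le u_eq] :=
  eff_sensitivity_steer_le (k := k) N_gt0 lambda_gt0 A_full x (g := y) vy_gt0 PAv.
have [v_le v_eq] :=
  eff_sensitivity_steer_le (k := k) N_gt0 lambda_gt0 A_full y (g := x) vx_gt0 PAu.
rewrite covC in v_le v_eq.
rewrite omega_vE zeta_uE zeta_vE.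
split; [exact: u_le | exact: v_le | exact: u_eq | exact: v_eq].
Qed.
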